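(* For every tree $T$, $\gamma^{DLD}(T)=\beta(T)$.
   Context: For a vertex $u$, $N(u)$ is its set of neighbours and $N[u]=N(u)\cup\{u\}$. A code in a graph with vertex set $V$ is a non-empty subset $C\subseteq V$; $I(C;u)=N[u]\cap C$. A code $C$ is solid-locating-dominating if $I(C;u)\ne\emptyset$ for every $u\in V\setminus C$ and $I(C;u)\not\subseteq I(C;v)$ for all distinct $u,v\in V\setminus C$; $\gamma^{DLD}$ denotes the minimum size of such a code. $\beta(T)$ is the independence number of $T$ (maximum size of a set of pairwise non-adjacent vertices). *)

From mathcomp Require Import all_boot.
Set Implicit Arguments. Unset Strict Implicit. Unset Printing Implicit Defensive.

Section Graph.
Variables (T : finType) (e : rel T).

Definition simple_graph := symmetric e /\ irreflexive e.

Definition cnbhd (u : T) : {set T} := [set v | (v == u) || e u v].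

Definition Icode (C : {set T}) (u : T) : {set T} := cnbhd u :&: C.

Definition solid_LD (C : {set T}) : Prop :=
  C != set0 /\
  (forall u, u \notin C -> Icode C u != set0) /\
  (forall u v, u \notin C -> v \notin C -> u != v -> ~~ (Icode C u \subset Icode C v)).

Definition independent (S : {set T}) : Prop :=
  forall x y, x \in S -> y \in S -> ~~ e x y.

Definition n_edges : nat := #|[set p : T * T | e p.1 p.2]| %/ 2.

Definition is_tree : Prop :=
  simple_graph /\ 0 < #|T| /\ (forall x y, connect e x y) /\ n_edges = #|T| - 1.

End Graph.

Definition is_min_card (T : finType) (P : {set T} -> Prop) (n : nat) : Prop :=
  (exists C, P C /\ #|C| = n) /\ (forall C, P C -> n <= #|C|).

Definition is_max_card (T : finType) (P : {set T} -> Prop) (n : nat) : Prop :=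
  (exists S, P S /\ #|S| = n) /\ (forall S, P S -> #|S| <= n).

Definition gammaDLD_is (T : finType) (e : rel T) (n : nat) := is_min_card (solid_LD e) n.
Definition beta_is (T : finType) (e : rel T) (n : nat) := is_max_card (independent e) n.

(** The lower bound [beta <= gamma^DLD] holds in every forest.  If [C] is
    solid-locating-dominating and [S] is independent, the vertices of [S :\: C]
    have nonempty, pairwise non-nested neighbourhoods in [C :\: S].  Among them,
    those with a single such neighbour have pairwise distinct ones, and every
    other vertex has two neighbours outside those; acyclicity makes the second
    group no larger than the remaining part of [C :\: S].

    For the upper bound, remove a deepest leaf [l] together with its parent [p]
    and recurse: [l] joins the independent set, and [p] (when it already has a
    neighbour among the located vertices) or else [l] joins the set [O] of
    vertices located by the code [~: O].  Choosing [l] deepest (all neighbours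
    of [p] but one are leaves) keeps the code neighbourhood of [p] from
    containing that of a previously located vertex. *)
From mathcomp Require Import all_boot zify.
Set Implicit Arguments. Unset Strict Implicit. Unset Printing Implicit Defensive.

Section EdgeCount.
Variables (T : finType) (e : rel T).
Hypothesis e_sym : symmetric e.

Definition nbh_in (B : {set T}) (x : T) : {set T} := [set y in B | e x y].
Definition deg (B : {set T}) (x : T) : nat := #|nbh_in B x|.

(* Ordered pairs: [ecount A A] is twice the number of edges of the subgraph induced by [A]. *)
Definition ecount (A B : {set T}) : nat := \sum_(x in A) deg B x.

Lemma degE (B : {set T}) (x : T) : deg B x = \sum_(y in B) e x y.
Proof.
rewrite /deg -sum1_card (eq_bigl (fun y => (y \in B) && e x y)) => [|y]; last by rewrite inE.
by rewrite big_mkcondr; apply: eq_bigr => y _; case: (e x y).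
Qed.

Lemma deg_gt1 (B : {set T}) (x y z : T) :
  y \in B -> z \in B -> y != z -> e x y -> e x z -> 1 < deg B x.
Proof.
move=> yB zB yz exy exz; have <- : #|[set y; z]| = 2 by rewrite cards2 yz.
by apply/subset_leq_card/subsetP => t /set2P[] ->; rewrite inE ?yB ?zB ?exy ?exz.
Qed.

Lemma ecountUl (A1 A2 B : {set T}) :
  [disjoint A1 & A2] -> ecount (A1 :|: A2) B = ecount A1 B + ecount A2 B.
Proof. by move=> A12; rewrite /ecount -bigU //; apply: eq_bigl => x; rewrite !inE. Qed.

Lemma ecountC (A B : {set T}) : ecount A B = ecount B A.
Proof.
rewrite /ecount; under eq_bigr do rewrite degE.
rewrite exchange_big; apply: eq_bigr => y _; rewrite degE.
by apply: eq_bigr => x _; rewrite e_sym.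
Qed.

Lemma ecountUr (A B1 B2 : {set T}) :
  [disjoint B1 & B2] -> ecount A (B1 :|: B2) = ecount A B1 + ecount A B2.
Proof. by move=> B12; rewrite ecountC ecountUl // !(ecountC A). Qed.

Lemma ecount1 (x : T) (B : {set T}) : ecount [set x] B = deg B x.
Proof. by rewrite /ecount big_set1. Qed.

Lemma ecountT : ecount setT setT = #|[set p : T * T | e p.1 p.2]|.
Proof.
rewrite /ecount (eq_bigr (fun x => \sum_y (e x y : nat))) => [|x _]; last first.
  by rewrite degE; apply: eq_bigl => y; rewrite in_setT.
rewrite (eq_bigl xpredT) => [|x]; last by rewrite in_setT.
rewrite pair_big /= -sum1_card [RHS]big_mkcond /=.
by apply: eq_bigr => p _; rewrite inE; case: (e p.1 p.2).
Qed.

Hypothesis e_irr : irreflexive e.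

Lemma ecountU1 (x : T) (W : {set T}) :
  x \notin W -> ecount (x |: W) (x |: W) = ecount W W + 2 * deg W x.
Proof.
move=> xW; have xW' : [disjoint [set x] & W] by rewrite disjoints1.
rewrite ecountUl // !ecountUr // (ecountC W [set x]) !ecount1.
have -> : deg [set x] x = 0.
  apply/eqP; rewrite cards_eq0; apply/eqP/setP => y; rewrite !inE.
  by case: eqP => // ->; rewrite e_irr.
lia.
Qed.

End EdgeCount.

Section Antichain.
Variables (T : finType) (e : rel T).
Hypotheses (e_sym : symmetric e) (e_irr : irreflexive e).

Definition nbh_antichain (Z X : {set T}) : Prop :=
  (forall x, x \in X -> nbh_in e Z x != set0) /\
  (forall x x', x \in X -> x' \in X -> x != x' -> ~~ (nbh_in e Z x \subset nbh_in e Z x')).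

Lemma Icode_notin (C : {set T}) (x : T) : x \notin C -> Icode e C x = nbh_in e C x.
Proof.
move=> xC; apply/setP => y; rewrite !inE andbC.
by case: (eqVneq y x) => [->|]; rewrite ?(negbTE xC).
Qed.

Lemma solid_LDE (C : {set T}) : solid_LD e C <-> C != set0 /\ nbh_antichain C (~: C).
Proof.
have IC u : u \in ~: C -> Icode e C u = nbh_in e C u by rewrite in_setC; apply: Icode_notin.
split=> [[C0 [dom sep]]|[C0 [dom sep]]]; do 2!split=> //.
- by move=> u uC; rewrite -IC //; apply: dom; rewrite -in_setC.
- by move=> u v uC vC; rewrite -!IC //; apply: sep; rewrite -in_setC.
- by move=> u uC; rewrite IC ?in_setC //; apply: dom; rewrite in_setC.
- by move=> u v uC vC; rewrite !IC ?in_setC //; apply: sep; rewrite in_setC.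
Qed.

Lemma nbh_antichainU1 (Z X : {set T}) (x0 w : T) :
  nbh_antichain Z X -> x0 \notin X -> e x0 w ->
  (forall x, x \in X -> ~~ e x w) ->
  (forall x, x \in X -> exists2 y, y \in nbh_in e Z x & ~~ e x0 y) ->
  nbh_antichain (w |: Z) (x0 |: X).
Proof.
move=> [nbh0 nbh_sub] x0X ex0w Xw far.
have nbhX x : x \in X -> nbh_in e (w |: Z) x = nbh_in e Z x.
  move=> xX; apply/setP => y; rewrite !inE.
  by case: (eqVneq y w) => [->|_]; rewrite ?(negbTE (Xw x xX)) ?andbF.
split=> [x /setU1P[->|xX]|x x' /setU1P[->|xX] /setU1P[->|x'X]]; rewrite ?eqxx //.
- by apply/set0Pn; exists w; rewrite !inE eqxx.
- by rewrite nbhX //; apply: nbh0.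
- move=> _; rewrite (nbhX x') //; apply/subsetPn; exists w; first by rewrite !inE eqxx.
  by rewrite inE (negbTE (Xw x' x'X)) andbF.
- move=> _; rewrite (nbhX x) //; have [y yN ex0y] := far x xX.
  by apply/subsetPn; exists y; rewrite // inE (negbTE ex0y) andbF.
- by rewrite !nbhX //; apply: nbh_sub.
Qed.

Lemma independentU1 (S : {set T}) (l : T) :
  independent e S -> (forall y, y \in S -> ~~ e l y) -> independent e (l |: S).
Proof.
move=> indS lS x y /setU1P[->|xS] /setU1P[->|yS]; rewrite ?e_irr //; last exact: indS.
- exact: lS.
- by rewrite e_sym; apply: lS.
Qed.

End Antichain.

Lemma notin_subsetD (T : finType) (A B D : {set T}) (z : T) :
  D \subset A :\: B -> z \in B -> z \notin D.
Proof. by move=> /subsetP DAB zB; apply/negP => /DAB; rewrite inE zB. Qed.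

Lemma setDU1_pair (T : finType) (A O : {set T}) (a b : T) :
  b \in A -> a != b -> O \subset A :\: [set a; b] ->
  A :\: (a |: O) = b |: (A :\: [set a; b] :\: O).
Proof.
move=> bA ab OA; have bO := notin_subsetD OA (set22 a b).
apply/setP => z; rewrite !inE; case: (eqVneq z b) => [->|_].
  by rewrite (negbTE bO) bA eq_sym (negbTE ab).
by case: (z == a); case: (z \in O).
Qed.

Section DeepLeaf.
Variables (T : finType) (e : rel T).
Hypotheses (e_sym : symmetric e) (e_irr : irreflexive e).

Definition internal (A : {set T}) : {set T} := [set z in A | 1 < deg e A z].

Variables (A : {set T}) (l p : T).
Hypotheses (lA : l \in A) (pA : p \in A) (epl : e p l).
Hypotheses (leaf_l : deg e A l <= 1) (deep_p : deg e (internal A) p <= 1).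

Let A' := A :\: [set l; p].
Let A'A : A' \subset A := subsetDl A [set l; p].

Lemma leaf_neq_parent : l != p.
Proof. by apply: contraTneq epl => ->; rewrite e_irr. Qed.

Lemma card_setD_leaf_parent : #|A'| + 2 = #|A|.
Proof.
have lpA : [set l; p] \subset A by apply/subsetP => z /set2P[] ->.
have := subset_leq_card lpA; rewrite cards2 leaf_neq_parent => le2A.
by rewrite cardsD (setIidPr lpA) cards2 leaf_neq_parent subnK.
Qed.

Lemma leaf_nbh (z : T) : z \in A -> e l z -> z = p.
Proof. by move=> zA elz; apply: (card_le1_eqP leaf_l); rewrite inE ?zA ?elz // pA e_sym. Qed.

Lemma not_leaf_nbh (z : T) : z \in A' -> ~~ e l z.
Proof.
rewrite !inE negb_or => /andP[/andP[_ zp] zA]; apply: contra zp => elz.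
by rewrite (leaf_nbh zA elz).
Qed.

Variable O' : {set T}.
Hypotheses (O'A' : O' \subset A') (antiO' : nbh_antichain e (A' :\: O') O').

Lemma mem_internal_parent_nbh (c x : T) :
  c \in A -> x \in A' -> e p c -> e c x -> c \in internal A.
Proof.
move=> cA xA' epc ecx; rewrite inE cA; apply: (deg_gt1 pA _ _ _ ecx).
- by move: xA'; rewrite inE => /andP[].
- by apply: contraTneq xA' => <-; rewrite !inE eqxx orbT.
- by rewrite e_sym.
Qed.

Lemma nbh_antichain_add_parent : (exists2 v, v \in O' & e p v) ->
  nbh_antichain e (A :\: (p |: O')) (p |: O').
Proof.
move=> [v0 v0O' epv0].
have O'A'C : O' \subset A :\: [set p; l] by rewrite setUC.
have pl : p != l by rewrite eq_sym leaf_neq_parent.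
have -> : A :\: (p |: O') = l |: (A' :\: O').
  by rewrite (setDU1_pair lA pl O'A'C) [[set p; l]]setUC.
have O'A x : x \in O' -> x \in A' by apply/subsetP.
apply: nbh_antichainU1 => // [|x xO'|x xO'].
- exact: notin_subsetD O'A' (set22 l p).
- by rewrite e_sym; apply: not_leaf_nbh; apply: O'A.
have [c cN] := set0Pn _ (antiO'.1 x xO'); exists c => //; apply/negP => epc.
move: cN; rewrite inE => /andP[/setDP[cA' cO'] exc].
have [c' c'N] := set0Pn _ (antiO'.1 v0 v0O').
move: c'N; rewrite inE => /andP[/setDP[c'A' _] ev0c'].
(* [c] and [v0] are neighbours of [p] that are not leaves of [A], hence equal by [deep_p]. *)
have cI : c \in internal A.
  by apply: (mem_internal_parent_nbh (subsetP A'A c cA') (O'A x xO') epc); rewrite e_sym.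
have v0I : v0 \in internal A.
  exact: (mem_internal_parent_nbh (subsetP A'A v0 (O'A v0 v0O')) c'A' epv0 ev0c').
have v0c : v0 = c by apply: (card_le1_eqP deep_p); rewrite inE ?cI ?v0I.
by move: cO'; rewrite -v0c v0O'.
Qed.

Lemma nbh_antichain_add_leaf : (forall v, v \in O' -> ~~ e p v) ->
  nbh_antichain e (A :\: (l |: O')) (l |: O').
Proof.
move=> pO'; rewrite (setDU1_pair pA leaf_neq_parent O'A').
apply: nbh_antichainU1 => // [||x xO'|x xO'].
- exact: notin_subsetD O'A' (set21 l p).
- by rewrite e_sym.
- by rewrite e_sym; apply: pO'.
have [c cN] := set0Pn _ (antiO'.1 x xO'); exists c => //.
by apply: not_leaf_nbh; move: cN; rewrite inE => /andP[/setDP[]].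
Qed.

End DeepLeaf.

Section Tree.
Variables (T : finType) (e : rel T).
Hypotheses (e_sym : symmetric e) (e_irr : irreflexive e).
Hypothesis e_conn : forall x y, connect e x y.
Hypothesis e_edges : n_edges e = #|T| - 1.
Hypothesis T_gt0 : 0 < #|T|.

Lemma exists_cut_edge (W : {set T}) (w x : T) : w \in W -> x \notin W ->
  exists w' x', [/\ w' \in W, x' \notin W & e w' x'].
Proof.
move=> wW xW.
have [/exists_inP [w' w'W /exists_inP [x' x'W ex]]|/exists_inPn noedge] :=
  boolP [exists w' in W, exists x' in ~: W, e w' x'].
  by exists w', x'; rewrite -in_setC.
have out (a b : T) : a \in W -> b \notin W -> ~~ e a b.
  by move=> aW bW; have /exists_inPn := noedge a aW; apply; rewrite in_setC.
have W_closed : closed e (mem W).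
  move=> a b eab; apply/idP/idP => [aW|bW]; apply: contraTT eab => nW.
  - exact: out.
  - by rewrite e_sym; apply: out.
by have := closed_connect W_closed (e_conn w x); rewrite wW (negbTE xW).
Qed.

Lemma ecountT_lt : ecount e setT setT < 2 * #|T|.
Proof.
rewrite ecountT; have := ltn_ceil #|[set p : T * T | e p.1 p.2]| (isT : 0 < 2).
move: e_edges; rewrite /n_edges; lia.
Qed.

Lemma ecount_add_setC (W : {set T}) :
  W != set0 -> ecount e W W + 2 * #|~: W| <= ecount e setT setT.
Proof.
move: {2}#|~: W| (erefl #|~: W|) => m; elim: m W => [|m IH] W WC W0.
  have -> : W = setT by rewrite -(setCK W) (cards0_eq WC) setC0.
  by rewrite setCT cards0 addn0.
have [w wW] := set0Pn _ W0.
have [x] : exists x, x \in ~: W by apply/card_gt0P; rewrite WC.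
rewrite in_setC => xW; have [w' [x' [w'W x'W ew'x']]] := exists_cut_edge wW xW.
have x'W0 : x' |: W != set0 by apply/set0Pn; exists x'; rewrite setU11.
have x'WC : #|~: (x' |: W)| = m.
  by have := cardsC W; have := cardsC (x' |: W); rewrite cardsU1 x'W; lia.
have := IH _ x'WC x'W0; rewrite ecountU1 //.
have : 0 < deg e W x' by apply/card_gt0P; exists w'; rewrite inE w'W e_sym.
lia.
Qed.

Lemma tree_ecount_lt (W : {set T}) : W != set0 -> ecount e W W < 2 * #|W|.
Proof.
by move=> W0; have := ecount_add_setC W0; have := ecountT_lt; have := cardsC W; lia.
Qed.

End Tree.

Section Forest.
Variables (T : finType) (e : rel T).
Hypotheses (e_sym : symmetric e) (e_irr : irreflexive e).
(* Every nonempty induced subgraph has fewer edges than vertices: the graph is a forest. *)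
Hypothesis e_forest : forall W : {set T}, W != set0 -> ecount e W W < 2 * #|W|.

Lemma card_le_deg_gt1 (X Y : {set T}) : [disjoint X & Y] ->
  (forall x, x \in X -> 1 < deg e Y x) -> #|X| <= #|Y|.
Proof.
move=> XY degXY; have [->|/set0Pn [x xX]] := eqVneq X set0; first by rewrite cards0.
have XY0 : X :|: Y != set0 by apply/set0Pn; exists x; rewrite inE xX.
have YX : [disjoint Y & X] by rewrite disjoint_sym.
have := e_forest XY0; rewrite cardsU (disjoint_setI0 XY) cards0 subn0.
rewrite ecountUl // !ecountUr // (ecountC e_sym Y X).
have : 2 * #|X| <= ecount e X Y.
  by rewrite mulnC -sum_nat_const; apply: leq_sum => z /degXY.
lia.
Qed.

Lemma card_le_nbh_antichain (X Z : {set T}) :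
  [disjoint X & Z] -> nbh_antichain e Z X -> #|X| <= #|Z|.
Proof.
move=> XZ [nbh0 nbh_sub].
pose X1 := [set x in X | deg e Z x == 1].
pose X2 := [set x in X | 1 < deg e Z x].
pose f x := odflt x [pick y in nbh_in e Z x].
have nbh_f x : x \in X1 -> nbh_in e Z x = [set f x].
  rewrite inE => /andP[_ /cards1P [y Ny]]; rewrite /f Ny.
  by case: pickP => [z /set1P -> //|/(_ y)]; rewrite set11.
have X1X : {subset X1 <= X} by move=> x; rewrite inE => /andP[].
have X2X : {subset X2 <= X} by move=> x; rewrite inE => /andP[].
have f_inj : {in X1 &, injective f}.
  move=> x x' xX1 x'X1 fxx'.
  apply: contraTeq (_ : nbh_in e Z x \subset nbh_in e Z x') => [xx'|].
    exact: nbh_sub (X1X _ xX1) (X1X _ x'X1) xx'.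
  by rewrite !nbh_f // fxx'.
have fX1Z : f @: X1 \subset Z.
  apply/subsetP => _ /imsetP [x xX1 ->]; move: (set11 (f x)).
  by rewrite -nbh_f // inE => /andP[].
have nbh_X2 x : x \in X2 -> nbh_in e Z x \subset Z :\: f @: X1.
  move=> xX2; apply/subsetP => y yN.
  have yZ : y \in Z by move: yN; rewrite inE => /andP[].
  rewrite inE yZ andbT; apply/imsetP => -[x' x'X1 yfx'].
  have x'x : x' = x.
    apply/eqP; apply: contraTT (_ : nbh_in e Z x' \subset nbh_in e Z x).
      exact: nbh_sub (X1X _ x'X1) (X2X _ xX2).
    by rewrite nbh_f // sub1set -yfx'.
  move: x'X1; rewrite x'x !inE => /andP[_ /eqP deg1].
  by move: xX2; rewrite inE deg1 ltnn andbF.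
have cardX2 : #|X2| <= #|Z :\: f @: X1|.
  apply: card_le_deg_gt1 => [|x xX2].
    by apply: disjointWl (disjointWr (subsetDl Z _) XZ); apply/subsetP.
  apply: leq_trans (subset_leq_card (_ : nbh_in e Z x \subset nbh_in e (Z :\: f @: X1) x)).
    by move: xX2; rewrite inE => /andP[].
  apply/subsetP => y yN; rewrite inE (subsetP (nbh_X2 x xX2)) //.
  by move: yN; rewrite inE => /andP[].
have XX12 : X \subset X1 :|: X2.
  apply/subsetP => x xX; rewrite !inE xX /=.
  by have := nbh0 x xX; rewrite -card_gt0 /deg; case: #|_| => [|[|]].
have := (leq_card_setU X1 X2).1; have := subset_leq_card XX12.
rewrite cardsDS // card_in_imset // in cardX2; have := subset_leq_card fX1Z.
rewrite card_in_imset //; lia.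
Qed.

Lemma card_independent_le_solid_LD (C S : {set T}) :
  solid_LD e C -> independent e S -> #|S| <= #|C|.
Proof.
move=> /solid_LDE [_ [nbh0 nbh_sub]] indS.
have nbh_S x : x \in S -> nbh_in e C x = nbh_in e (C :\: S) x.
  move=> xS; apply/setP => y; rewrite !inE.
  by case: (boolP (y \in S)) => yS; rewrite ?(negbTE (indS x y xS yS)) ?andbF.
have SC x : x \in S :\: C -> x \in ~: C /\ x \in S by rewrite !inE => /andP[].
have : #|S :\: C| <= #|C :\: S|.
  apply: card_le_nbh_antichain.
    rewrite disjoint_subset; apply/subsetP => x /setDP[_ xC].
    by rewrite !inE (negbTE xC) andbF.
  split=> [x /SC [xC xS]|x x' /SC [xC xS] /SC [x'C x'S]]; rewrite -!nbh_S //.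
    exact: nbh0.
  exact: nbh_sub.
rewrite !cardsD (setIC C S); have := subset_leq_card (subsetIl S C).
by have := subset_leq_card (subsetIr S C); lia.
Qed.

Lemma exists_deg_le1 (W : {set T}) : W != set0 -> exists2 p, p \in W & deg e W p <= 1.
Proof.
move=> W0; apply/exists_inP; apply: contraTT (e_forest W0) => /exists_inPn deg_gt1.
rewrite -leqNgt mulnC -sum_nat_const; apply: leq_sum => z /deg_gt1.
by rewrite -ltnNge.
Qed.

Lemma exists_deep_leaf (A : {set T}) (x y : T) : x \in A -> y \in A -> e x y ->
  exists l p, [/\ l \in A, p \in A, e p l, deg e A l <= 1 & deg e (internal e A) p <= 1].
Proof.
move=> xA yA exy; have [I0|I_ne] := eqVneq (internal e A) set0.
  exists y, x; split=> //.
    have : y \notin internal e A by rewrite I0 inE.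
    by rewrite inE yA -leqNgt.
  rewrite I0 /deg (_ : nbh_in e set0 x = set0) ?cards0 //.
  by apply/setP => z; rewrite !inE.
have [p pI degp] := exists_deg_le1 I_ne.
move: (pI); rewrite inE => /andP[pA degAp].
have [l] : exists2 l, l \in nbh_in e A p & l \notin internal e A.
  apply/subsetPn; apply: contraTN degAp => /subsetP NI; rewrite -leqNgt (leq_trans _ degp) //.
  apply/subset_leq_card/subsetP => z zN; rewrite inE NI //.
  by move: zN; rewrite inE => /andP[].
rewrite !inE => /andP[lA epl]; rewrite lA /= -leqNgt => degl.
by exists l, p.
Qed.

Lemma exists_independent_antichain_split (A : {set T}) :
  exists O S : {set T}, [/\ O \subset A, S \subset A, nbh_antichain e (A :\: O) O,
    independent e S & #|S| + #|O| = #|A|].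
Proof.
have [n] := ubnP #|A|; elim: n A => // n IH A ltAn.
have [/exists_inP [x xA /exists_inP [y yA exy]]|/exists_inPn noedge] :=
  boolP [exists x in A, exists y in A, e x y]; last first.
  exists set0, A; split; rewrite ?sub0set ?cards0 ?addn0 //.
    by split=> x; rewrite inE.
  by move=> a b aA bA; have /exists_inPn := noedge a aA; apply.
have [l [p [lA pA epl degl degp]]] := exists_deep_leaf xA yA exy.
have cardA := card_setD_leaf_parent e_irr lA pA epl.
have /IH [O' [S' [O'A' S'A' antiO' indS' cardA']]] : #|A :\: [set l; p]| < n by lia.
have A'A : A :\: [set l; p] \subset A := subsetDl A _.
have indS : independent e (l |: S').
  apply: independentU1 => // z /(subsetP S'A'); exact: not_leaf_nbh.
have cardS : #|l |: S'| = #|S'| + 1 by rewrite cardsU1 (notin_subsetD S'A' (set21 l p)) addnC.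
have [/exists_inP [v0 v0O' epv0]|/exists_inPn pO'] := boolP [exists v in O', e p v].
- exists (p |: O'), (l |: S'); split=> //.
  + by rewrite subUset sub1set pA (subset_trans O'A').
  + by rewrite subUset sub1set lA (subset_trans S'A').
  + apply: (nbh_antichain_add_parent e_sym e_irr lA pA epl degl degp O'A' antiO').
    by exists v0.
  + by rewrite cardS (cardsU1 p) (notin_subsetD O'A' (set22 l p)); lia.
- exists (l |: O'), (l |: S'); split=> //.
  + by rewrite subUset sub1set lA (subset_trans O'A').
  + by rewrite subUset sub1set lA (subset_trans S'A').
  + exact: (nbh_antichain_add_leaf e_sym e_irr pA epl degl O'A' antiO' pO').
  + by rewrite cardS (cardsU1 l O') (notin_subsetD O'A' (set21 l p)); lia.
Qed.

End Forest.

Theorem mainTheorem13 (T : finType) (e : rel T) :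
  is_tree e -> exists n, gammaDLD_is e n /\ beta_is e n.
Proof.
move=> [[e_sym e_irr] [T_gt0 [e_conn e_edges]]].
have e_forest := tree_ecount_lt e_sym e_irr e_conn e_edges T_gt0.
have [O [S [_ _ antiO indS cardSO]]] :=
  exists_independent_antichain_split e_sym e_irr e_forest [set: T].
rewrite setTD in antiO.
have solidC : solid_LD e (~: O).
  apply/solid_LDE; rewrite setCK; split=> //.
  case/card_gt0P: T_gt0 => t _; apply/set0Pn.
  have [tO|] := boolP (t \in O); last by exists t; rewrite inE.
  by have /set0Pn [c] := antiO.1 t tO; rewrite inE => /andP[]; exists c.
have cardC : #|~: O| = #|S| by have := cardsC O; rewrite cardsT in cardSO; lia.
exists #|S|; split; split.
- by exists (~: O).
- by move=> C solidC'; apply: card_independent_le_solid_LD solidC' indS.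
- by exists S.
- by move=> S' indS'; rewrite -cardC; apply: card_independent_le_solid_LD solidC indS'.
Qed.
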